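(* Let $K$ be an algebraically closed field of characteristic $p\ge5$, $f\in K[[x,y,z]]$, $a\in K$ with $a^3+27\ne0$, and suppose $j^3f=x^3+y^3+z^3+axyz$ (in particular $j^2f=0$). Then $f\in P_8$, i.e. $f$ is right equivalent to $x^3+y^3+z^3+a'xyz$ for some $a'\in K$.
   Context: $j^3f$ is the image of $f$ in $\mathfrak m/\mathfrak m^4$ (the terms of $f$ of degree $\le3$). Right equivalence: $g=\Phi(f)$ for a $K$-algebra automorphism $\Phi$ of $K[[x,y,z]]$. *)

From HB Require Import structures.
From mathcomp Require Import all_boot all_order all_algebra all_field.
Set Implicit Arguments. Unset Strict Implicit. Unset Printing Implicit Defensive.
Import Order.TTheory GRing.Theory Num.Theory.
Local Open Scope ring_scope.

(* Formal power series in three variables x,y,z over K: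
   f i j k = coefficient of x^i y^j z^k. *)
Definition ps3 (K : fieldType) := nat -> nat -> nat -> K.

Definition ps3_zero (K : fieldType) : ps3 K := fun _ _ _ => 0.
Definition ps3_one (K : fieldType) : ps3 K :=
  fun i j k => if [&& i == 0%N, j == 0%N & k == 0%N] then 1 else 0.
Definition ps3_add (K : fieldType) (f g : ps3 K) : ps3 K :=
  fun i j k => f i j k + g i j k.
Definition ps3_scale (K : fieldType) (c : K) (f : ps3 K) : ps3 K :=
  fun i j k => c * f i j k.
Definition ps3_mul (K : fieldType) (f g : ps3 K) : ps3 K :=
  fun i j k => \sum_(a < i.+1) \sum_(b < j.+1) \sum_(c < k.+1)
                 f a b c * g (i - a)%N (j - b)%N (k - c)%N.

Definition is_alg_aut3 (K : fieldType) (Phi : ps3 K -> ps3 K) : Prop :=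
  [/\ forall f g, Phi (ps3_add f g) = ps3_add (Phi f) (Phi g),
      forall f g, Phi (ps3_mul f g) = ps3_mul (Phi f) (Phi g),
      Phi (ps3_one K) = ps3_one K,
      forall (c : K) f, Phi (ps3_scale c f) = ps3_scale c (Phi f)
    & bijective Phi].

Definition hesse_cubic (K : fieldType) (a : K) : ps3 K :=
  fun i j k =>
    if [&& i == 3%N, j == 0%N & k == 0%N] then 1
    else if [&& i == 0%N, j == 3%N & k == 0%N] then 1
    else if [&& i == 0%N, j == 0%N & k == 3%N] then 1
    else if [&& i == 1%N, j == 1%N & k == 1%N] then a
    else 0.

Definition jet3_eq (K : fieldType) (f g : ps3 K) : Prop :=
  forall i j k, (i + j + k <= 3)%N -> f i j k = g i j k.

(* The Jacobian ideal J of the Hesse cubic F = x^3 + y^3 + z^3 + a xyz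
   satisfies m^4 <= m^2 J as soon as 3 and a^3 + 27 are invertible: modulo J,
   x^2 is w yz with w = -a/3, and running around the cycle
   x^2yz -> y^2z^2 -> xz^3 -> x^2yz multiplies by w^3 != 1.  Hence, if f - F
   has order d >= 4, a substitution x_i |-> x_i - q_i with q_i of order d - 2
   kills the degree-d part of the error (first-order Taylor expansion of F),
   while the quadratic remainder has order > d.  These substitutions converge
   m-adically to an automorphism taking f to F.  The characteristic assumption
   is only used through 3 != 0. *)

From HB Require Import structures.
From mathcomp Require Import all_boot all_order all_algebra all_field.
From mathcomp Require Import boolp zify ring.
Import GRing.Theory.
Local Open Scope ring_scope.
Set Implicit Arguments. Unset Strict Implicit. Unset Printing Implicit Defensive.

Lemma lt_sum3 i j k :
  [/\ i < (i + j + k).+1, j < (i + j + k).+1 & k < (i + j + k).+1]%N.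
Proof. by split; lia. Qed.

Section PowerSeriesRing.
Variable K : fieldType.
Implicit Types f g h : ps3 K.

HB.instance Definition _ := gen_eqMixin (ps3 K).
HB.instance Definition _ := gen_choiceMixin (ps3 K).

Lemma ps3_ext f g : (forall i j k, f i j k = g i j k) -> f = g.
Proof. by move=> fg; apply/funext=> i; apply/funext=> j; apply/funext=> k. Qed.

Definition ps3_opp f : ps3 K := fun i j k => - f i j k.

Lemma ps3_addA : associative (@ps3_add K).
Proof. by move=> f g h; apply: ps3_ext => i j k; rewrite /ps3_add addrA. Qed.
Lemma ps3_addC : commutative (@ps3_add K).
Proof. by move=> f g; apply: ps3_ext => i j k; rewrite /ps3_add addrC. Qed.
Lemma ps3_add0 : left_id (ps3_zero K) (@ps3_add K).
Proof. by move=> f; apply: ps3_ext => i j k; rewrite /ps3_add add0r. Qed.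
Lemma ps3_addN : left_inverse (ps3_zero K) ps3_opp (@ps3_add K).
Proof. by move=> f; apply: ps3_ext => i j k; rewrite /ps3_add addNr. Qed.

HB.instance Definition _ :=
  GRing.isZmodule.Build (ps3 K) ps3_addA ps3_addC ps3_add0 ps3_addN.

Lemma ps3_addE f g i j k : (f + g) i j k = f i j k + g i j k. Proof. by []. Qed.
Lemma ps3_oppE f i j k : (- f) i j k = - f i j k. Proof. by []. Qed.
Lemma ps3_subE f g i j k : (f - g) i j k = f i j k - g i j k. Proof. by []. Qed.
Lemma ps3_zeroE i j k : (0 : ps3 K) i j k = 0. Proof. by []. Qed.

(* The Cauchy product is compared with a product of truncations in the
   ring [{poly {poly {poly K}}}], which inherits associativity etc. *)
Definition coef3 (p : {poly {poly {poly K}}}) i j k := ((p`_i)`_j)`_k.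
Definition poly3_trunc N f : {poly {poly {poly K}}} :=
  \poly_(i < N) \poly_(j < N) \poly_(k < N) f i j k.

Lemma coef3_trunc N f i j k :
  coef3 (poly3_trunc N f) i j k = if [&& i < N, j < N & k < N]%N then f i j k else 0.
Proof.
rewrite /coef3 /poly3_trunc coef_poly; case: ltnP => //= _; last by rewrite !coef0.
rewrite coef_poly; case: ltnP => //= _; last by rewrite !coef0.
by rewrite coef_poly.
Qed.

Lemma coef3M p q i j k : coef3 (p * q) i j k =
  \sum_(a < i.+1) \sum_(b < j.+1) \sum_(c < k.+1)
     coef3 p a b c * coef3 q (i - a) (j - b) (k - c).
Proof.
rewrite /coef3 coefM !coef_sum; apply: eq_bigr => a _.
rewrite coefM coef_sum; apply: eq_bigr => b _.
by rewrite coefM.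
Qed.

Lemma ps3_mul_coef3 f g p q i j k :
  (forall a b c, a <= i -> b <= j -> c <= k -> f a b c = coef3 p a b c)%N ->
  (forall a b c, a <= i -> b <= j -> c <= k -> g a b c = coef3 q a b c)%N ->
  ps3_mul f g i j k = coef3 (p * q) i j k.
Proof.
move=> fp gq; rewrite coef3M /ps3_mul; apply: eq_bigr => [[a /= ai]] _.
apply: eq_bigr => [[b /= bj]] _; apply: eq_bigr => [[c /= ck]] _.
by rewrite fp // gq // leq_subr.
Qed.

Lemma ps3_mul_trunc f g N i j k : (i < N)%N -> (j < N)%N -> (k < N)%N ->
  ps3_mul f g i j k = coef3 (poly3_trunc N f * poly3_trunc N g) i j k.
Proof.
move=> iN jN kN; apply: ps3_mul_coef3 => a b c ai bj ck; rewrite coef3_trunc.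
all: by rewrite (leq_ltn_trans ai) // (leq_ltn_trans bj) // (leq_ltn_trans ck).
Qed.

Lemma poly3_trunc1 N : (0 < N)%N -> poly3_trunc N (ps3_one K) = 1.
Proof.
move=> N0; apply/polyP => a; apply/polyP => b; apply/polyP => c.
have := coef3_trunc N (ps3_one K) a b c; rewrite /coef3 => ->.
rewrite /ps3_one; case: a => [|a]; case: b => [|b]; case: c => [|c];
by rewrite /= ?N0 !(coefC, coef0) /=; try case: ifP.
Qed.

Lemma poly3_truncD N f g : poly3_trunc N (ps3_add f g) = poly3_trunc N f + poly3_trunc N g.
Proof.
apply/polyP => a; apply/polyP => b; apply/polyP => c; rewrite !coefD.
have := coef3_trunc N (ps3_add f g) a b c; rewrite /coef3 => ->.
have := coef3_trunc N f a b c; rewrite /coef3 => ->.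
have := coef3_trunc N g a b c; rewrite /coef3 => ->.
by case: ifP; rewrite ?addr0.
Qed.

Lemma ps3_mulA : associative (@ps3_mul K).
Proof.
move=> f g h; apply: ps3_ext => i j k; have [iN jN kN] := lt_sum3 i j k.
set N := (i + j + k).+1 in iN jN kN *.
transitivity (coef3 (poly3_trunc N f * (poly3_trunc N g * poly3_trunc N h)) i j k).
  apply: ps3_mul_coef3 => a b c ai bj ck.
    by rewrite coef3_trunc (leq_ltn_trans ai) // (leq_ltn_trans bj) // (leq_ltn_trans ck).
  by apply: ps3_mul_trunc; apply: leq_ltn_trans; eassumption.
rewrite mulrA; symmetry; apply: ps3_mul_coef3 => a b c ai bj ck.
  by apply: ps3_mul_trunc; apply: leq_ltn_trans; eassumption.
by rewrite coef3_trunc (leq_ltn_trans ai) // (leq_ltn_trans bj) // (leq_ltn_trans ck).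
Qed.

Lemma ps3_mulC : commutative (@ps3_mul K).
Proof.
move=> f g; apply: ps3_ext => i j k.
have [iN jN kN] := lt_sum3 i j k.
by rewrite !(ps3_mul_trunc _ _ iN jN kN) mulrC.
Qed.

Lemma ps3_mul1 : left_id (ps3_one K) (@ps3_mul K).
Proof.
move=> f; apply: ps3_ext => i j k.
have [iN jN kN] := lt_sum3 i j k.
by rewrite (ps3_mul_trunc _ _ iN jN kN) poly3_trunc1 // mul1r coef3_trunc iN jN kN.
Qed.

Lemma ps3_mulDl : left_distributive (@ps3_mul K) (@ps3_add K).
Proof.
move=> f g h; apply: ps3_ext => i j k.
have [iN jN kN] := lt_sum3 i j k.
rewrite /ps3_add !(ps3_mul_trunc _ _ iN jN kN).
by rewrite -/(ps3_add f g) poly3_truncD mulrDl /coef3 !coefD.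
Qed.

Lemma ps3_one_neq0 : ps3_one K != 0.
Proof.
apply/eqP => /(congr1 (fun f : ps3 K => f 0%N 0%N 0%N)).
by rewrite /ps3_one => /eqP; rewrite oner_eq0.
Qed.

HB.instance Definition _ := GRing.Zmodule_isComNzRing.Build (ps3 K)
  ps3_mulA ps3_mulC ps3_mul1 ps3_mulDl ps3_one_neq0.

Lemma ps3_mulE f g : f * g = ps3_mul f g. Proof. by []. Qed.
Lemma ps3_oneE : 1 = ps3_one K. Proof. by []. Qed.

End PowerSeriesRing.

Lemma sum_ord_delta (V : nzRingType) n a (F : nat -> V) :
  \sum_(x < n) ((x : nat) == a)%:R * F x = if (a < n)%N then F a else 0.
Proof.
rewrite -(@big_ord1_eq V 0 +%R) [RHS]big_mkcond; apply: eq_bigr => x _.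
by case: eqP; rewrite ?mul1r ?mul0r.
Qed.

Lemma sum3_delta (V : nzRingType) i j k a b c (F : nat -> nat -> nat -> V) :
  \sum_(x < i.+1) \sum_(y < j.+1) \sum_(z < k.+1)
     [&& (x : nat) == a, (y : nat) == b & (z : nat) == c]%:R * F x y z
  = if [&& a <= i, b <= j & c <= k]%N then F a b c else 0.
Proof.
have split_delta (x y z : nat) : [&& x == a, y == b & z == c]%:R * F x y z
    = (x == a)%:R * ((y == b)%:R * ((z == c)%:R * F x y z)) :> V.
  by case: (x == a); case: (y == b); case: (z == c); rewrite ?mul1r ?mul0r.
transitivity (\sum_(x < i.+1) ((x : nat) == a)%:R * (\sum_(y < j.+1) ((y : nat) == b)%:R *
     (\sum_(z < k.+1) ((z : nat) == c)%:R * F x y z))).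
  apply: eq_bigr => x _; rewrite mulr_sumr; apply: eq_bigr => y _.
  by rewrite !mulr_sumr; apply: eq_bigr => z _; rewrite split_delta.
under eq_bigr => x _ do under eq_bigr => y _ do rewrite (sum_ord_delta _ _ (F x y)).
under eq_bigr => x _ do
  rewrite (sum_ord_delta _ _ (fun y => if (c < k.+1)%N then F x y c else 0)).
rewrite (sum_ord_delta _ _
  (fun x => if (b < j.+1)%N then if (c < k.+1)%N then F x b c else 0 else 0)) !ltnS.
by case: (a <= i)%N; case: (b <= j)%N; case: (c <= k)%N.
Qed.

Section Monomials.
Variable K : fieldType.
Implicit Types (u v : K) (g : ps3 K).

Definition ps3_term u a b c : ps3 K :=
  fun i j k => u * [&& i == a, j == b & k == c]%:R.
Definition ps3C u := ps3_term u 0 0 0.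
Definition mono a b c := ps3_term 1 a b c.
Definition X := mono 1 0 0.
Definition Y := mono 0 1 0.
Definition Z := mono 0 0 1.

Lemma ps3_termM u a b c g i j k : (ps3_term u a b c * g) i j k =
  if [&& a <= i, b <= j & c <= k]%N then u * g (i - a)%N (j - b)%N (k - c)%N else 0.
Proof.
rewrite ps3_mulE /ps3_mul -(sum3_delta i j k a b c
  (fun x y z => u * g (i - x)%N (j - y)%N (k - z)%N)).
apply: eq_bigr => x _; apply: eq_bigr => y _; apply: eq_bigr => z _.
by rewrite /ps3_term mulrCA mulrA.
Qed.

Lemma ps3CM u g i j k : (ps3C u * g) i j k = u * g i j k.
Proof. by rewrite ps3_termM /= !subn0. Qed.

Lemma ps3C_scale u g : ps3C u * g = ps3_scale u g.
Proof. by apply: ps3_ext => i j k; rewrite ps3CM. Qed.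

Lemma ps3C_is_zmod_morphism : zmod_morphism ps3C.
Proof. by move=> u v; apply: ps3_ext => i j k; rewrite ps3_subE /ps3C /ps3_term mulrBl. Qed.

Lemma ps3C_is_monoid_morphism : monoid_morphism ps3C.
Proof.
split; last by move=> u v; apply: ps3_ext => i j k; rewrite ps3CM /ps3C /ps3_term mulrA.
by apply: ps3_ext => i j k; rewrite /ps3C /ps3_term mul1r ps3_oneE /ps3_one; case: ifP.
Qed.

HB.instance Definition _ :=
  GRing.isZmodMorphism.Build K (ps3 K) ps3C ps3C_is_zmod_morphism.
HB.instance Definition _ :=
  GRing.isMonoidMorphism.Build K (ps3 K) ps3C ps3C_is_monoid_morphism.

Lemma monoM a b c a' b' c' :
  mono a b c * mono a' b' c' = mono (a + a')%N (b + b')%N (c + c')%N.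
Proof.
apply: ps3_ext => i j k; rewrite ps3_termM /mono /ps3_term mul1r.
have shift m n n' : ((n <= m)%N && (m - n == n')%N) = (m == n + n')%N.
  apply/andP/eqP => [[nm /eqP <-]|->]; first by rewrite subnKC.
  by rewrite leq_addr addKn.
rewrite -shift -(shift j) -(shift k).
by case: (a <= i)%N; case: (b <= j)%N; case: (c <= k)%N; rewrite ?andbF ?mul1r.
Qed.

Lemma mono0 : mono 0 0 0 = 1.
Proof. exact: (rmorph1 ps3C). Qed.

Lemma monoE a b c : X ^+ a * Y ^+ b * Z ^+ c = mono a b c.
Proof.
have powE (m : nat) a' b' c' : mono a' b' c' ^+ m = mono (a' * m)%N (b' * m)%N (c' * m)%N.
  elim: m => [|m IH]; first by rewrite expr0 !muln0 mono0.
  by rewrite exprS IH monoM !mulnS.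
by rewrite !powE !monoM !mul1n !mul0n !addn0 !add0n.
Qed.

Lemma ps3_sumE (I : Type) (r : seq I) (P : pred I) (F : I -> ps3 K) i j k :
  (\sum_(x <- r | P x) F x) i j k = \sum_(x <- r | P x) F x i j k.
Proof. exact: (big_morph (fun g : ps3 K => g i j k)). Qed.

End Monomials.

Section Order.
Variable K : fieldType.
Implicit Types f g h : ps3 K.

(* [ord_ge g n] says that g lies in the n-th power of the maximal ideal. *)
Definition ord_ge g n := forall i j k, (i + j + k < n)%N -> g i j k = 0.

Lemma ord_geW g m n : (m <= n)%N -> ord_ge g n -> ord_ge g m.
Proof. by move=> mn gn i j k lt_m; apply: gn; apply: leq_trans mn. Qed.

Lemma ord_geD f g n : ord_ge f n -> ord_ge g n -> ord_ge (f + g) n.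
Proof. by move=> fn gn i j k lt_n; rewrite ps3_addE fn // gn // addr0. Qed.

Lemma ord_geN g n : ord_ge g n -> ord_ge (- g) n.
Proof. by move=> gn i j k lt_n; rewrite ps3_oppE gn // oppr0. Qed.

Lemma ord_geB f g n : ord_ge f n -> ord_ge g n -> ord_ge (f - g) n.
Proof. by move=> fn gn; apply: ord_geD => //; apply: ord_geN. Qed.

Lemma ord_geM f g s t : ord_ge f s -> ord_ge g t -> ord_ge (f * g) (s + t).
Proof.
move=> fs gt i j k lt_st; rewrite ps3_mulE /ps3_mul.
apply: big1 => [[a ai]] _; apply: big1 => [[b bj]] _; apply: big1 => [[c ck]] _ /=.
have [abc_s|s_abc] := ltnP (a + b + c) s; first by rewrite fs // mul0r.
by rewrite gt ?mulr0 //; rewrite ltnS in ai bj ck; lia.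
Qed.

Lemma ord_geMl f g t : ord_ge g t -> ord_ge (f * g) t.
Proof. by move=> gt; rewrite -(add0n t); apply: ord_geM gt. Qed.

Lemma ord_geMr f g s : ord_ge f s -> ord_ge (f * g) s.
Proof. by move=> fs; rewrite -(addn0 s); apply: ord_geM fs _. Qed.

Lemma ord_geX g s e : ord_ge g s -> ord_ge (g ^+ e) (s * e).
Proof.
move=> gs; elim: e => [|e IH]; first by rewrite muln0.
by rewrite exprS mulnS; apply: ord_geM.
Qed.

Lemma ord_geX1 g e : ord_ge g 1 -> ord_ge (g ^+ e) e.
Proof. by move/(ord_geX (e := e)); rewrite mul1n. Qed.

Lemma ord_ge_sum (I : Type) (r : seq I) (P : pred I) (F : I -> ps3 K) n :
  (forall x, P x -> ord_ge (F x) n) -> ord_ge (\sum_(x <- r | P x) F x) n.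
Proof. by move=> Fn; apply: (big_ind (ord_ge^~ n)) => // f g; apply: ord_geD. Qed.

Lemma ord_ge_all_eq0 g : (forall n, ord_ge g n) -> g = 0.
Proof. by move=> gn; apply: ps3_ext => i j k; rewrite ps3_zeroE (gn (i + j + k).+1). Qed.

Lemma ord_ge_mono a b c : ord_ge (mono K a b c) (a + b + c).
Proof.
move=> i j k lt_abc; rewrite /mono /ps3_term mul1r.
by case: and3P => // [[/eqP ia /eqP jb /eqP kc]]; move: lt_abc; rewrite ia jb kc ltnn.
Qed.

Lemma ord_ge_varX : ord_ge (X K) 1. Proof. exact: ord_ge_mono. Qed.
Lemma ord_ge_varY : ord_ge (Y K) 1. Proof. exact: ord_ge_mono. Qed.
Lemma ord_ge_varZ : ord_ge (Z K) 1. Proof. exact: ord_ge_mono. Qed.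

Lemma ord_ge_near_var (p v : ps3 K) : ord_ge v 1 -> ord_ge (p - v) 2 -> ord_ge p 1.
Proof. by move=> v1 pv; rewrite -(subrK v p); apply: ord_geD => //; apply: ord_geW pv. Qed.

Definition trunc N g : ps3 K :=
  fun i j k => if (i + j + k <= N)%N then g i j k else 0.
Definition homog N g : ps3 K :=
  fun i j k => if (i + j + k == N)%N then g i j k else 0.
Definition boxed N g :=
  forall i j k, (N < i)%N || (N < j)%N || (N < k)%N -> g i j k = 0.

Lemma ord_ge_sub_trunc N g : ord_ge (g - trunc N g) N.+1.
Proof. by move=> i j k lt_N; rewrite ltnS in lt_N; rewrite ps3_subE /trunc lt_N subrr. Qed.

Lemma ord_ge_trunc N g s : ord_ge g s -> ord_ge (trunc N g) s.
Proof. by move=> gs i j k lt_s; rewrite /trunc gs //; case: ifP. Qed.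

Lemma truncD N f g : trunc N (f + g) = trunc N f + trunc N g.
Proof. by apply: ps3_ext => i j k; rewrite ps3_addE /trunc; case: ifP; rewrite ?addr0. Qed.

Lemma truncCM N u g : trunc N (ps3C u * g) = ps3C u * trunc N g.
Proof. by apply: ps3_ext => i j k; rewrite ps3CM /trunc ps3CM; case: ifP; rewrite ?mulr0. Qed.

Lemma trunc_mono N a b c : (a + b + c <= N)%N -> trunc N (mono K a b c) = mono K a b c.
Proof.
move=> abcN; apply: ps3_ext => i j k; rewrite /trunc /mono /ps3_term.
by case: and3P => [[/eqP -> /eqP -> /eqP ->]|]; rewrite ?abcN ?mulr0 //; case: ifP.
Qed.

Lemma trunc_mono0 N a b c : (N < a + b + c)%N -> trunc N (mono K a b c) = 0.
Proof.
move=> Nabc; apply: ps3_ext => i j k; rewrite /trunc /mono /ps3_term ps3_zeroE.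
case: and3P => [[/eqP -> /eqP -> /eqP ->]|]; last by rewrite mulr0; case: ifP.
by rewrite leqNgt Nabc.
Qed.

Lemma ord_ge_homog N g : ord_ge (homog N g) N.
Proof. by move=> i j k lt_N; rewrite /homog; case: eqP => // eN; rewrite eN ltnn in lt_N. Qed.

Lemma ord_ge_sub_homog N g : ord_ge g N -> ord_ge (g - homog N g) N.+1.
Proof.
move=> gN i j k lt_N; rewrite ps3_subE /homog; case: eqP => [_|ne]; first by rewrite subrr.
by rewrite subr0 gN //; lia.
Qed.

Lemma boxed_trunc N g : boxed N (trunc N g).
Proof. by move=> i j k big; rewrite /trunc; case: ifP => //; lia. Qed.

Lemma boxed_homog N g : boxed N (homog N g).
Proof. by move=> i j k big; rewrite /homog; case: eqP => //; lia. Qed.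

End Order.

Section BoxSubstitution.
Variable K : fieldType.
Implicit Types g h : ps3 K.
Local Notation mono := (mono K).

Definition box N := ('I_N.+1 * 'I_N.+1 * 'I_N.+1)%type.

Lemma box_sum (V : zmodType) N (F : box N -> V) :
  \sum_(m : box N) F m = \sum_(a < N.+1) \sum_(b < N.+1) \sum_(c < N.+1) F (a, b, c).
Proof.
rewrite (eq_bigr (fun m => F (m.1, m.2))); last by case.
rewrite -(pair_bigA _ (fun ab c => F (ab, c))) /=.
rewrite (eq_bigr (fun ab => \sum_(c < N.+1) F ((ab.1, ab.2), c))); last by case.
by rewrite -(pair_bigA _ (fun a b => \sum_(c < N.+1) F ((a, b), c))).
Qed.

Lemma boxed_expand N g : boxed N g ->
  g = \sum_(m : box N) ps3C (g m.1.1 m.1.2 m.2) * mono m.1.1 m.1.2 m.2.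
Proof.
move=> gN; apply: ps3_ext => i j k; rewrite ps3_sumE box_sum.
transitivity (\sum_(a < N.+1) \sum_(b < N.+1) \sum_(c < N.+1)
  [&& (a : nat) == i, (b : nat) == j & (c : nat) == k]%:R * g a b c); last first.
  apply: eq_bigr => a _; apply: eq_bigr => b _; apply: eq_bigr => c _.
  by rewrite ps3CM /mono /ps3_term /= mul1r mulrC (eq_sym i) (eq_sym j) (eq_sym k).
by rewrite sum3_delta; case: ifP => // out; apply: gN; lia.
Qed.

Variables p1 p2 p3 : ps3 K.

Definition mono_at a b c := p1 ^+ a * p2 ^+ b * p3 ^+ c.

Definition box_subst N g :=
  \sum_(m : box N) ps3C (g m.1.1 m.1.2 m.2) * mono_at m.1.1 m.1.2 m.2.

Lemma box_subst_is_zmod_morphism N : zmod_morphism (box_subst N).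
Proof.
move=> g h; rewrite /box_subst -sumrB; apply: eq_bigr => m _.
by rewrite ps3_subE rmorphB mulrBl.
Qed.

HB.instance Definition _ N := GRing.isZmodMorphism.Build (ps3 K) (ps3 K)
  (box_subst N) (box_subst_is_zmod_morphism N).

Lemma box_substCM N u g : box_subst N (ps3C u * g) = ps3C u * box_subst N g.
Proof.
by rewrite /box_subst mulr_sumr; apply: eq_bigr => m _; rewrite ps3CM rmorphM mulrA.
Qed.

Lemma box_subst_mono N a b c : (a <= N)%N -> (b <= N)%N -> (c <= N)%N ->
  box_subst N (mono a b c) = mono_at a b c.
Proof.
move=> aN bN cN; rewrite /box_subst box_sum /=.
transitivity (\sum_(x < N.+1) \sum_(y < N.+1) \sum_(z < N.+1)
  [&& (x : nat) == a, (y : nat) == b & (z : nat) == c]%:R * mono_at x y z).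
  apply: eq_bigr => x _; apply: eq_bigr => y _; apply: eq_bigr => z _.
  by rewrite /mono /ps3_term mul1r rmorph_nat.
by rewrite sum3_delta aN bN cN.
Qed.

Lemma box_subst_boxed N M g : boxed N g -> (N <= M)%N -> box_subst M g = box_subst N g.
Proof.
move=> gN NM; rewrite (boxed_expand gN) !raddf_sum; apply: eq_bigr => [[[x y] z]] _ /=.
have := ltn_ord x; have := ltn_ord y; have := ltn_ord z; rewrite !ltnS => zN yN xN.
by rewrite !box_substCM !box_subst_mono //; apply: leq_trans NM.
Qed.

Lemma box_substM N g h : boxed N g -> boxed N h ->
  box_subst (N + N) (g * h) = box_subst N g * box_subst N h.
Proof.
move=> gN hN; rewrite {1}(boxed_expand gN) {1}(boxed_expand hN) big_distrlr /= raddf_sum.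
rewrite [box_subst N g]/box_subst [box_subst N h]/box_subst big_distrlr /=.
apply: eq_bigr => m _; rewrite raddf_sum /=; apply: eq_bigr => m' _.
rewrite mulrACA -rmorphM mulrACA monoM box_substCM box_subst_mono.
- by rewrite /mono_at !exprD rmorphM; congr (_ * _); ring.
all: by rewrite leq_add // -ltnS; apply: ltn_ord.
Qed.

Hypotheses (p1_1 : ord_ge p1 1) (p2_1 : ord_ge p2 1) (p3_1 : ord_ge p3 1).

Lemma ord_ge_mono_at a b c : ord_ge (mono_at a b c) (a + b + c).
Proof. by apply: ord_geM; [apply: ord_geM|]; apply: ord_geX1. Qed.

Lemma ord_ge_box_subst N g s : ord_ge g s -> ord_ge (box_subst N g) s.
Proof.
move=> gs; apply: ord_ge_sum => [[[a b] c]] _ /=.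
have [abc_s|s_abc] := ltnP (a + b + c) s; first by rewrite gs // rmorph0 mul0r.
by apply/ord_geMl/(ord_geW s_abc)/ord_ge_mono_at.
Qed.

End BoxSubstitution.

Section Substitution.
Variable K : fieldType.
Implicit Types f g h : ps3 K.
Local Notation mono := (mono K).

(* The coefficient of degree n of g(p1, p2, p3) only depends on the truncation
   of g at degree n, which is a polynomial; this defines the substitution
   whenever the p's have no constant term. *)
Definition subst3 p1 p2 p3 g : ps3 K :=
  fun i j k => box_subst p1 p2 p3 (i + j + k) (trunc (i + j + k) g) i j k.

Lemma subst3_XYZ g : subst3 (X K) (Y K) (Z K) g = g.
Proof.
apply: ps3_ext => i j k; rewrite /subst3; set n := (i + j + k)%N.
have -> : box_subst (X K) (Y K) (Z K) n (trunc n g) = trunc n g.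
  rewrite [RHS](boxed_expand (boxed_trunc (N := n) g)).
  by apply: eq_bigr => m _; rewrite /mono_at monoE.
by rewrite /trunc leqnn.
Qed.

Variables p1 p2 p3 : ps3 K.
Hypotheses (p1_1 : ord_ge p1 1) (p2_1 : ord_ge p2 1) (p3_1 : ord_ge p3 1).
Local Notation bsubst := (box_subst p1 p2 p3).
Local Notation subst := (subst3 p1 p2 p3).

Lemma subst3_coef N g i j k : (i + j + k <= N)%N ->
  subst g i j k = bsubst N (trunc N g) i j k.
Proof.
move=> ijkN; rewrite /subst3; set n := (i + j + k)%N.
rewrite -(box_subst_boxed p1 p2 p3 (boxed_trunc (N := n) g) ijkN).
apply/eqP; rewrite -subr_eq0 -ps3_subE -raddfB; apply/eqP.
apply: (@ord_ge_box_subst _ _ _ _ p1_1 p2_1 p3_1 _ _ n.+1); last exact: ltnSn.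
have -> : trunc n g - trunc N g = (g - trunc N g) - (g - trunc n g) by ring.
apply: ord_geB; last exact: ord_ge_sub_trunc.
exact: ord_geW (ord_ge_sub_trunc (N := N) g).
Qed.

Lemma ord_ge_subst3_trunc N g : ord_ge (subst g - bsubst N (trunc N g)) N.+1.
Proof. by move=> i j k lt_N; rewrite ps3_subE (@subst3_coef N) ?subrr // -ltnS. Qed.

Lemma subst3D f g : subst (f + g) = subst f + subst g.
Proof. by apply: ps3_ext => i j k; rewrite /subst3 truncD raddfD. Qed.

Lemma subst3CM u g : subst (ps3C u * g) = ps3C u * subst g.
Proof. by apply: ps3_ext => i j k; rewrite ps3CM /subst3 truncCM box_substCM ps3CM. Qed.

Lemma subst3N g : subst (- g) = - subst g.
Proof. by rewrite -mulN1r -(rmorphN1 (@ps3C K)) subst3CM rmorphN1 mulN1r. Qed.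

Lemma subst3B f g : subst (f - g) = subst f - subst g.
Proof. by rewrite subst3D subst3N. Qed.

Lemma ord_ge_subst3 g s : ord_ge g s -> ord_ge (subst g) s.
Proof.
by move=> gs i j k; apply: (ord_ge_box_subst p1_1 p2_1 p3_1 _ (ord_ge_trunc _ gs)).
Qed.

Lemma subst3M f g : subst (f * g) = subst f * subst g.
Proof.
apply: ps3_ext => i j k; set n := (i + j + k)%N.
rewrite /subst3 -/n -(box_subst_boxed p1 p2 p3 (boxed_trunc (N := n) (f * g)) (leq_addr n n)).
have trunc_mul : ord_ge (bsubst (n + n) (trunc n (f * g)) -
                         bsubst (n + n) (trunc n f * trunc n g)) n.+1.
  rewrite -raddfB; apply: ord_ge_box_subst => //.
  have -> : trunc n (f * g) - trunc n f * trunc n g =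
     (f - trunc n f) * g + trunc n f * (g - trunc n g) - (f * g - trunc n (f * g)) by ring.
  apply: ord_geB; last exact: ord_ge_sub_trunc.
  by apply: ord_geD; [apply: ord_geMr|apply: ord_geMl]; apply: ord_ge_sub_trunc.
have := trunc_mul i j k (ltnSn n); rewrite ps3_subE => /eqP; rewrite subr_eq0 => /eqP ->.
rewrite box_substM; try exact: boxed_trunc.
have approx_mul : ord_ge (bsubst n (trunc n f) * bsubst n (trunc n g) - subst f * subst g) n.+1.
  have -> : bsubst n (trunc n f) * bsubst n (trunc n g) - subst f * subst g =
     - ((subst f - bsubst n (trunc n f)) * subst g +
        bsubst n (trunc n f) * (subst g - bsubst n (trunc n g))) by ring.
  by apply/ord_geN/ord_geD; [apply: ord_geMr|apply: ord_geMl]; apply: ord_ge_subst3_trunc.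
by have := approx_mul i j k (ltnSn n); rewrite ps3_subE => /eqP; rewrite subr_eq0 => /eqP ->.
Qed.

Lemma subst3_1 : subst 1 = 1.
Proof.
apply: ps3_ext => i j k; rewrite /subst3 -mono0 trunc_mono // box_subst_mono //.
by rewrite /mono_at !expr0 !mulr1 mono0.
Qed.

Lemma subst3_linear_mono a b c p : (a + b + c = 1)%N -> ord_ge p 1 ->
  mono_at p1 p2 p3 a b c = p -> subst (mono a b c) = p.
Proof.
move=> abc1 p_1 pE; apply: ps3_ext => i j k; rewrite /subst3.
have [ijk0|ijk_gt0] := posnP (i + j + k)%N.
  by rewrite trunc_mono0 ?abc1 ?ijk0 // raddf0 ps3_zeroE p_1 // ijk0.
rewrite trunc_mono ?abc1 // box_subst_mono ?pE //; lia.
Qed.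

Lemma subst3_X : subst (X K) = p1.
Proof. by apply: subst3_linear_mono => //; rewrite /mono_at !expr0 !mulr1 expr1. Qed.
Lemma subst3_Y : subst (Y K) = p2.
Proof. by apply: subst3_linear_mono => //; rewrite /mono_at !expr0 mul1r mulr1 expr1. Qed.
Lemma subst3_Z : subst (Z K) = p3.
Proof. by apply: subst3_linear_mono => //; rewrite /mono_at !expr0 !mul1r expr1. Qed.

End Substitution.

Section Continuity.
Variable K : fieldType.
Implicit Types u v g : ps3 K.

Lemma ord_ge_sub_mul k u u' v v' s t :
  ord_ge (u - u') (k + s) -> ord_ge u' s -> ord_ge (v - v') (k + t) -> ord_ge v t ->
  ord_ge (u * v - u' * v') (k + (s + t)).
Proof.
move=> du u's dv vt; have -> : u * v - u' * v' = (u - u') * v + u' * (v - v') by ring.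
apply: ord_geD; first by rewrite addnA; apply: ord_geM.
by rewrite addnCA; apply: ord_geM.
Qed.

Lemma ord_ge_sub_exp k u u' e : ord_ge (u - u') (k + 1) -> ord_ge u 1 -> ord_ge u' 1 ->
  ord_ge (u ^+ e - u' ^+ e) (k + e).
Proof.
move=> du u1 u'1; elim: e => [|e IH]; first by rewrite !expr0 subrr.
have -> : (k + e.+1 = k + (1 + e))%N by lia.
by rewrite !exprS; apply: ord_ge_sub_mul => //; apply: ord_geX1.
Qed.

Variables p1 p2 p3 q1 q2 q3 : ps3 K.
Hypotheses (p1_1 : ord_ge p1 1) (p2_1 : ord_ge p2 1) (p3_1 : ord_ge p3 1).
Hypotheses (q1_1 : ord_ge q1 1) (q2_1 : ord_ge q2 1) (q3_1 : ord_ge q3 1).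
Variable k : nat.
Hypotheses (pq1 : ord_ge (p1 - q1) (k + 1)) (pq2 : ord_ge (p2 - q2) (k + 1))
           (pq3 : ord_ge (p3 - q3) (k + 1)).

Lemma ord_ge_sub_mono_at a b c :
  ord_ge (mono_at p1 p2 p3 a b c - mono_at q1 q2 q3 a b c) (k + (a + b + c)).
Proof.
apply: ord_ge_sub_mul; last exact: ord_geX1.
- by apply: ord_ge_sub_mul; try apply: ord_ge_sub_exp; try apply: ord_geX1.
- by apply: ord_geM; apply: ord_geX1.
- exact: ord_ge_sub_exp.
Qed.

Lemma ord_ge_sub_subst3 g s : ord_ge g s ->
  ord_ge (subst3 p1 p2 p3 g - subst3 q1 q2 q3 g) (k + s).
Proof.
move=> gs i j l lt_ks; rewrite ps3_subE /subst3; set n := (i + j + l)%N; rewrite -ps3_subE.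
suff : ord_ge (\sum_(m : box n) ps3C (trunc n g m.1.1 m.1.2 m.2) *
     (mono_at p1 p2 p3 m.1.1 m.1.2 m.2 - mono_at q1 q2 q3 m.1.1 m.1.2 m.2)) (k + s).
  by rewrite /box_subst -sumrB (eq_bigr _ (fun m _ => mulrBr _ _ _)); apply.
apply: ord_ge_sum => [[[a b] c]] _ /=.
have [abc_s|s_abc] := ltnP (a + b + c) s.
  by rewrite (ord_ge_trunc _ gs) // rmorph0 mul0r.
apply: ord_geMl; apply: ord_geW (ord_ge_sub_mono_at (a := a) (b := b) (c := c)).
by rewrite leq_add2l.
Qed.

End Continuity.

Section Limits.
Variable K : fieldType.

(* The coefficient of degree n is read off at index n + 1, where a sequence
   satisfying the hypothesis of [ord_ge_sub_lim3] has stabilized. *)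
Definition lim3 (u : nat -> ps3 K) : ps3 K := fun i j k => u (i + j + k).+1 i j k.

Lemma ord_ge_sub_lim3 (u : nat -> ps3 K) c :
  (forall n, ord_ge (u n.+1 - u n) (n + c)) -> forall n, ord_ge (lim3 u - u n) (n + c).
Proof.
move=> cauchy.
have far n m : (n <= m)%N -> ord_ge (u m - u n) (n + c).
  elim: m => [|m IH]; first by rewrite leqn0 => /eqP ->; rewrite subrr.
  rewrite leq_eqVlt => /orP [/eqP <-|]; first by rewrite subrr.
  rewrite ltnS => nm; have -> : u m.+1 - u n = (u m.+1 - u m) + (u m - u n) by ring.
  by apply: ord_geD; [apply: ord_geW (cauchy m); rewrite leq_add2r|apply: IH].
move=> n i j k lt_nc; rewrite ps3_subE /lim3.
have [n_le|lt_n] := leqP n (i + j + k).+1; first by rewrite -ps3_subE far.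
apply/eqP; rewrite subr_eq0 eq_sym -subr_eq0 -ps3_subE; apply/eqP.
by apply: far (ltnW lt_n) _ _ _ _; lia.
Qed.

End Limits.

Section Bijectivity.
Variable K : fieldType.
Implicit Types f g t : ps3 K.
Variables p1 p2 p3 : ps3 K.
Hypotheses (p1X : ord_ge (p1 - X K) 2) (p2Y : ord_ge (p2 - Y K) 2)
           (p3Z : ord_ge (p3 - Z K) 2).
Local Notation subst := (subst3 p1 p2 p3).

Let p1_1 := ord_ge_near_var (ord_ge_varX K) p1X.
Let p2_1 := ord_ge_near_var (ord_ge_varY K) p2Y.
Let p3_1 := ord_ge_near_var (ord_ge_varZ K) p3Z.

Lemma ord_ge_subst3_sub g s : ord_ge g s -> ord_ge (subst g - g) s.+1.
Proof.
move=> gs; rewrite -{2}(subst3_XYZ g) -add1n.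
by apply: ord_ge_sub_subst3; rewrite ?add1n //; apply: ord_ge_mono.
Qed.

Lemma subst3_inj : injective subst.
Proof.
move=> f g eq_fg; apply/eqP; rewrite -subr_eq0; apply/eqP; apply: ord_ge_all_eq0.
elim=> [|n IH] //; have := ord_ge_subst3_sub IH.
by rewrite subst3B // eq_fg subrr sub0r -{2}[f - g]opprK; apply: ord_geN.
Qed.

(* Solve subst g = t degree by degree, correcting the error in degree n by
   its homogeneous part, then pass to the limit. *)
Lemma subst3_surj t : exists g, subst g = t.
Proof.
pose fix v n : ps3 K := if n is n'.+1 then v n' + homog n' (t - subst (v n')) else 0.
have err n : ord_ge (t - subst (v n)) n.
  elim: n => [|n IH] //=; rewrite subst3D //; set e := t - subst (v n).
  have -> : t - (subst (v n) + subst (homog n e)) =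
            (e - homog n e) - (subst (homog n e) - homog n e) by rewrite /e; ring.
  by apply: ord_geB; [apply: ord_ge_sub_homog|apply/ord_ge_subst3_sub/ord_ge_homog].
have cauchy n : ord_ge (v n.+1 - v n) (n + 0) by rewrite addn0 /= addrC addKr; apply: ord_ge_homog.
exists (lim3 v); apply/eqP; rewrite eq_sym -subr_eq0; apply/eqP; apply: ord_ge_all_eq0 => n.
have -> : t - subst (lim3 v) = (t - subst (v n)) - subst (lim3 v - v n) by rewrite subst3B //; ring.
apply: ord_geB => //; apply: ord_ge_subst3 => //.
by have := ord_ge_sub_lim3 cauchy (n := n); rewrite addn0.
Qed.

Lemma subst3_bij : bijective subst.
Proof.
pose inv t := sval (cid (subst3_surj t)).
have invK t : subst (inv t) = t by rewrite /inv; case: cid.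
by exists inv => // g; apply: subst3_inj; rewrite invK.
Qed.

Lemma subst3_is_alg_aut : is_alg_aut3 subst.
Proof.
split; [exact: subst3D|exact: subst3M|exact: subst3_1| |exact: subst3_bij].
by move=> c g; rewrite -!ps3C_scale subst3CM.
Qed.

End Bijectivity.

Section JacobianIdeal.
Variable K : fieldType.
Variable a : K.
Hypothesis three_neq0 : (3%:R : K) != 0.
Hypothesis a_nonsing : a ^+ 3 + 27%:R != 0.
Implicit Types M N m u v t : ps3 K.
Local Notation mono := (mono K).
Local Notation X := (X K).
Local Notation Y := (Y K).
Local Notation Z := (Z K).

Definition hesse u v t := u ^+ 3 + v ^+ 3 + t ^+ 3 + ps3C a * (u * v * t).

(* [hesse_d u v t] is the derivative of [hesse u v t] with respect to u. *)
Definition hesse_d u v t := 3%:R * u ^+ 2 + ps3C a * (v * t).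

(* [in_jac k M]: M lies in m^k J, with J the Jacobian ideal of the Hesse cubic. *)
Definition in_jac k M := exists q1 q2 q3,
  [/\ ord_ge q1 k, ord_ge q2 k, ord_ge q3 k &
      M = hesse_d X Y Z * q1 + hesse_d Y X Z * q2 + hesse_d Z X Y * q3].

Lemma in_jac0 k : in_jac k 0.
Proof. by exists 0, 0, 0; split; rewrite // !mulr0 !addr0. Qed.

Lemma in_jacD k M N : in_jac k M -> in_jac k N -> in_jac k (M + N).
Proof.
move=> [q1 [q2 [q3 [? ? ? ->]]]] [r1 [r2 [r3 [? ? ? ->]]]].
by exists (q1 + r1), (q2 + r2), (q3 + r3); split; try apply: ord_geD; rewrite //; ring.
Qed.

Lemma in_jacM j k m M : ord_ge m j -> in_jac k M -> in_jac (j + k) (m * M).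
Proof.
move=> mj [q1 [q2 [q3 [? ? ? ->]]]].
by exists (m * q1), (m * q2), (m * q3); split; try apply: ord_geM; rewrite //; ring.
Qed.

Lemma in_jacCM k (c : K) M : in_jac k M -> in_jac k (ps3C c * M).
Proof. by rewrite -{2}(add0n k); apply: in_jacM. Qed.

Lemma in_jacW k k' M : (k' <= k)%N -> in_jac k M -> in_jac k' M.
Proof.
by move=> k'k [q1 [q2 [q3 [? ? ? ->]]]]; exists q1, q2, q3; split; try apply: ord_geW k'k _.
Qed.

Lemma in_jac_sum k (I : Type) (r : seq I) (P : pred I) (F : I -> ps3 K) :
  (forall x, P x -> in_jac k (F x)) -> in_jac k (\sum_(x <- r | P x) F x).
Proof. by move=> FJ; apply: (big_ind (in_jac k)) => //; [apply: in_jac0|apply: in_jacD]. Qed.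

Let w := - a / 3%:R.

(* Modulo J, a square u^2 can be traded for w v t when 3 u^2 + a v t is a
   generator of J. *)
Lemma in_jac_sq_sub k u v t m : in_jac k (hesse_d u v t * m) ->
  in_jac k (u ^+ 2 * m - ps3C w * (v * t * m)).
Proof.
move=> J; have -> : u ^+ 2 * m - ps3C w * (v * t * m) = ps3C 3%:R^-1 * (hesse_d u v t * m).
  have -> : ps3C w = - (ps3C a * ps3C 3%:R^-1) by rewrite -rmorphM -rmorphN /w mulNr.
  have inv3 : ps3C 3%:R^-1 * 3%:R = 1 :> ps3 K.
    by rewrite -(rmorph_nat (@ps3C K)) -rmorphM mulVf ?rmorph1.
  rewrite /hesse_d.
  move: (ps3C 3%:R^-1) inv3 => i3 inv3.
  transitivity ((i3 * 3%:R) * (u ^+ 2 * m) + i3 * ps3C a * (v * t * m)); last by ring.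
  by rewrite inv3 mul1r; ring.
exact: in_jacCM.
Qed.

Lemma in_jac_generators k m : ord_ge m k ->
  [/\ in_jac k (hesse_d X Y Z * m), in_jac k (hesse_d Y X Z * m) & in_jac k (hesse_d Z X Y * m)].
Proof.
move=> mk; split.
- by exists m, 0, 0; split; rewrite // !mulr0 !addr0.
- by exists 0, m, 0; split; rewrite // !mulr0 add0r addr0.
- by exists 0, 0, m; split; rewrite // !mulr0 !add0r.
Qed.

Lemma in_jac_reduce i j k : (i + j + k = 2)%N -> [/\
  in_jac 2 (mono i.+2 j k - ps3C w * mono i j.+1 k.+1),
  in_jac 2 (mono i j.+2 k - ps3C w * mono i.+1 j k.+1) &
  in_jac 2 (mono i j k.+2 - ps3C w * mono i.+1 j.+1 k)].
Proof.
move=> ijk; have [JX JY JZ] := in_jac_generators (@ord_ge_mono K i j k); rewrite ijk in JX JY JZ.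
have [X2 Y2 Z2] : [/\ X ^+ 2 = mono 2 0 0, Y ^+ 2 = mono 0 2 0 & Z ^+ 2 = mono 0 0 2].
  by split; rewrite -monoE !expr0 ?mulr1 ?mul1r.
have [YZ XZ XY] : [/\ Y * Z = mono 0 1 1, X * Z = mono 1 0 1 & X * Y = mono 1 1 0].
  by rewrite !monoM.
split.
- by have := in_jac_sq_sub JX; rewrite X2 YZ !monoM !add0n !add1n add2n.
- by have := in_jac_sq_sub JY; rewrite Y2 XZ !monoM !add0n !add1n add2n.
- by have := in_jac_sq_sub JZ; rewrite Z2 XY !monoM !add0n !add1n add2n.
Qed.

Lemma in_jac_trade k M N : in_jac k (M - ps3C w * N) -> in_jac k N -> in_jac k M.
Proof.
by move=> JMN JN; rewrite -(subrK (ps3C w * N) M); apply: in_jacD => //; apply: in_jacCM.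
Qed.

(* The three relations M1 = w M2 = w^2 M3 = w^3 M1 modulo m^2 J force M1 into
   m^2 J, because w^3 != 1 is equivalent to a^3 + 27 != 0. *)
Lemma in_jac_cycle M1 M2 M3 : in_jac 2 (M1 - ps3C w * M2) ->
  in_jac 2 (M2 - ps3C w * M3) -> in_jac 2 (M3 - ps3C w * M1) -> in_jac 2 M1.
Proof.
move=> J12 J23 J31.
have w3_neq1 : 1 - w ^+ 3 != 0.
  have -> : 1 - w ^+ 3 = (a ^+ 3 + 27%:R) / 3%:R ^+ 3.
    have n27 : (27%:R : K) != 0 by rewrite (_ : 27 = 3 ^ 3)%N // natrX expf_neq0.
    by rewrite /w; field; rewrite n27 three_neq0.
  by rewrite mulf_neq0 // invr_neq0 // expf_neq0.
set W := ps3C w in J12 J23 J31.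
have -> : M1 = ps3C (1 - w ^+ 3)^-1 *
    ((M1 - W * M2) + W * (M2 - W * M3) + W ^+ 2 * (M3 - W * M1)).
  have -> : (M1 - W * M2) + W * (M2 - W * M3) + W ^+ 2 * (M3 - W * M1) =
            ps3C (1 - w ^+ 3) * M1 by rewrite rmorphB rmorph1 rmorphXn /W; ring.
  by rewrite mulrA -rmorphM mulVf // rmorph1 mul1r.
by apply/in_jacCM/in_jacD; [apply: in_jacD|]; rewrite // -?rmorphXn; apply: in_jacCM.
Qed.

Lemma in_jac_mono4 i j k : (i + j + k = 4)%N -> in_jac 2 (mono i j k).
Proof.
have trX i' j' k' : (i' + j' + k' = 2)%N ->
    in_jac 2 (mono i' j'.+1 k'.+1) -> in_jac 2 (mono i'.+2 j' k').
  by case/in_jac_reduce => R _ _; apply: in_jac_trade R.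
have trY i' j' k' : (i' + j' + k' = 2)%N ->
    in_jac 2 (mono i'.+1 j' k'.+1) -> in_jac 2 (mono i' j'.+2 k').
  by case/in_jac_reduce => _ R _; apply: in_jac_trade R.
have trZ i' j' k' : (i' + j' + k' = 2)%N ->
    in_jac 2 (mono i'.+1 j'.+1 k') -> in_jac 2 (mono i' j' k'.+2).
  by case/in_jac_reduce => _ _ R; apply: in_jac_trade R.
have J211 : in_jac 2 (mono 2 1 1).
  apply: (in_jac_cycle (M2 := mono 0 2 2) (M3 := mono 1 0 3)).
  - by case: (@in_jac_reduce 0 1 1 erefl).
  - by case: (@in_jac_reduce 0 0 2 erefl).
  - by case: (@in_jac_reduce 1 0 1 erefl).
have J121 : in_jac 2 (mono 1 2 1).
  apply: (in_jac_cycle (M2 := mono 2 0 2) (M3 := mono 0 1 3)).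
  - by case: (@in_jac_reduce 1 0 1 erefl).
  - by case: (@in_jac_reduce 0 0 2 erefl).
  - by case: (@in_jac_reduce 0 1 1 erefl).
have J112 : in_jac 2 (mono 1 1 2).
  apply: (in_jac_cycle (M2 := mono 2 2 0) (M3 := mono 0 3 1)).
  - by case: (@in_jac_reduce 1 1 0 erefl).
  - by case: (@in_jac_reduce 0 2 0 erefl).
  - by case: (@in_jac_reduce 0 1 1 erefl).
have J310 := trX 1 1 0 erefl J121.
have J301 := trX 1 0 1 erefl J112.
have J130 := trY 1 1 0 erefl J211.
have J031 := trY 0 1 1 erefl J112.
have J103 := trZ 1 0 1 erefl J211.
have J013 := trZ 0 1 1 erefl J121.
have J400 := trX 2%N 0 0 erefl J211.
have J040 := trY 0 2%N 0 erefl J121.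
have J004 := trZ 0 0 2%N erefl J112.
have J220 := trX 0 2%N 0 erefl J031.
have J202 := trX 0 0 2%N erefl J013.
have J022 := trY 0 0 2%N erefl J103.
move=> ijk; have /andP[i4 j4] : ((i <= 4) && (j <= 4 - i))%N by lia.
have -> : k = (4 - i - j)%N by lia.
by move: i j i4 j4 {ijk} => [|[|[|[|[|i]]]]] [|[|[|[|[|j]]]]].
Qed.

Lemma in_jac_homog d e : (4 <= d)%N -> in_jac (d - 2) (homog d e).
Proof.
move=> d4; rewrite (boxed_expand (boxed_homog (N := d) e)).
apply: in_jac_sum => [[[x y] z]] _ /=; rewrite /homog.
case: eqP => [xyz|_]; last by rewrite rmorph0 mul0r; apply: in_jac0.
apply: in_jacCM.
(* Split off a factor of degree 4. *)
set x4 := minn x 4; set y4 := minn y (4 - x4); set z4 := (4 - x4 - y4)%N.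
have -> : mono x y z = mono (x - x4)%N (y - y4)%N (z - z4)%N * mono x4 y4 z4.
  by rewrite monoM; congr mono; rewrite /z4 /y4 /x4; lia.
apply: (@in_jacW (((x - x4) + (y - y4) + (z - z4)) + 2)%N); first by rewrite /z4 /y4 /x4; lia.
apply: in_jacM; first exact: ord_ge_mono.
by apply: in_jac_mono4; rewrite /z4 /y4 /x4; lia.
Qed.

Lemma jacobian_correction d e : (4 <= d)%N -> ord_ge e d -> exists q1 q2 q3,
  [/\ ord_ge q1 (d - 2), ord_ge q2 (d - 2), ord_ge q3 (d - 2) &
      ord_ge (e - (hesse_d X Y Z * q1 + hesse_d Y X Z * q2 + hesse_d Z X Y * q3)) d.+1].
Proof.
move=> d4 ed; have [q1 [q2 [q3 [? ? ? qE]]]] := in_jac_homog e d4.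
by exists q1, q2, q3; split; rewrite // -qE; apply: ord_ge_sub_homog.
Qed.

End JacobianIdeal.

Lemma iterate_choice (T : Type) (P : nat -> T -> Prop) (R : nat -> T -> T -> Prop) x0 :
  P 0%N x0 -> (forall n x, P n x -> exists y, R n x y /\ P n.+1 y) ->
  exists u : nat -> T, forall n, P n (u n) /\ R n (u n) (u n.+1).
Proof.
move=> P0 step.
have [next nextP] : {next : nat * T -> T &
    forall nx, P nx.1 nx.2 -> R nx.1 nx.2 (next nx) /\ P nx.1.+1 (next nx)}.
  apply: (@choice _ _ (fun nx y => P nx.1 nx.2 -> R nx.1 nx.2 y /\ P nx.1.+1 y)) => -[n x].
  have [/step [y]|nPnx] := pselect (P n x); first by exists y.
  by exists x => /nPnx.
pose fix u n := if n is m.+1 then next (m, u m) else x0.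
have Pu n : P n (u n) by elim: n => [|n IH] //; case: (nextP (n, u n)).
by exists u => n; split => //; case: (nextP (n, u n)).
Qed.

Section Newton.
Variable K : fieldType.
Variable a : K.
Hypothesis three_neq0 : (3%:R : K) != 0.
Hypothesis a_nonsing : a ^+ 3 + 27%:R != 0.
Local Notation X := (X K).
Local Notation Y := (Y K).
Local Notation Z := (Z K).
Local Notation hesse := (hesse a).
Local Notation hesse_d := (hesse_d a).
Implicit Types u v t q m : ps3 K.

Lemma hesse_cubicE : hesse_cubic a = hesse X Y Z.
Proof.
have -> : hesse X Y Z = mono K 3 0 0 + mono K 0 3 0 + mono K 0 0 3 + ps3C a * mono K 1 1 1.
  by rewrite -!monoE /hesse !expr0 !expr1 !mulr1 !mul1r.
apply: ps3_ext => i j k; rewrite !ps3_addE ps3CM /mono /ps3_term /hesse_cubic.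
by case: i => [|[|[|[|i]]]]; case: j => [|[|[|[|j]]]]; case: k => [|[|[|[|k]]]];
  rewrite /= ?mulr0n ?mulr1n ?mulr1 ?mulr0 ?addr0 ?add0r.
Qed.

Lemma subst3_hesse p1 p2 p3 : ord_ge p1 1 -> ord_ge p2 1 -> ord_ge p3 1 ->
  subst3 p1 p2 p3 (hesse X Y Z) = hesse p1 p2 p3.
Proof.
move=> p1_1 p2_1 p3_1; rewrite /hesse !subst3D // subst3CM // !subst3M //.
by rewrite subst3_X // subst3_Y // subst3_Z //; ring.
Qed.

Lemma ord_ge_hesse : ord_ge (hesse X Y Z) 3.
Proof.
have X1 := ord_ge_varX K; have Y1 := ord_ge_varY K; have Z1 := ord_ge_varZ K.
rewrite /hesse; apply: ord_geD.
  by apply: ord_geD; [apply: ord_geD|]; apply: ord_geX1.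
by apply: ord_geMl; apply: ord_geW (ord_geM (ord_geM X1 Y1) Z1).
Qed.

(* First-order Taylor expansion of the Hesse cubic at a point close to
   (X, Y, Z), with the gradient evaluated at (X, Y, Z) itself. *)
Lemma ord_ge_hesse_taylor d p1 p2 p3 q1 q2 q3 : (4 <= d)%N ->
  ord_ge (p1 - X) 2 -> ord_ge (p2 - Y) 2 -> ord_ge (p3 - Z) 2 ->
  ord_ge q1 (d - 2) -> ord_ge q2 (d - 2) -> ord_ge q3 (d - 2) ->
  ord_ge (hesse (p1 - q1) (p2 - q2) (p3 - q3) - hesse p1 p2 p3 +
          (hesse_d X Y Z * q1 + hesse_d Y X Z * q2 + hesse_d Z X Y * q3)) d.+1.
Proof.
move=> d4 p1X p2Y p3Z q1d q2d q3d.
have X1 := ord_ge_varX K; have Y1 := ord_ge_varY K; have Z1 := ord_ge_varZ K.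
have p1_1 := ord_ge_near_var X1 p1X; have p2_1 := ord_ge_near_var Y1 p2Y.
have p3_1 := ord_ge_near_var Z1 p3Z.
have -> : hesse (p1 - q1) (p2 - q2) (p3 - q3) - hesse p1 p2 p3 +
          (hesse_d X Y Z * q1 + hesse_d Y X Z * q2 + hesse_d Z X Y * q3) =
   ((3%:R * p1 * q1 * q1 - q1 * q1 * q1) + (3%:R * p2 * q2 * q2 - q2 * q2 * q2)
     + (3%:R * p3 * q3 * q3 - q3 * q3 * q3)
     + ps3C a * (p1 * q2 * q3 + p2 * q1 * q3 + p3 * q1 * q2 - q1 * q2 * q3))
   + ((3%:R * (X * X - p1 * p1) + ps3C a * (Y * Z - p2 * p3)) * q1
     + (3%:R * (Y * Y - p2 * p2) + ps3C a * (X * Z - p1 * p3)) * q2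
     + (3%:R * (Z * Z - p3 * p3) + ps3C a * (X * Y - p1 * p2)) * q3).
  by rewrite /hesse /hesse_d; ring.
have cubic u v t : ord_ge u 1 -> ord_ge v (d - 2) -> ord_ge t (d - 2) -> ord_ge (u * v * t) d.+1.
  by move=> u1 vd td; apply: ord_geW (ord_geM (ord_geM u1 vd) td); lia.
have q_1 q : ord_ge q (d - 2) -> ord_ge q 1 by apply: ord_geW; lia.
have sub_mul u u' v v' : ord_ge (u' - u) 2 -> ord_ge (v' - v) 2 -> ord_ge u' 1 -> ord_ge v 1 ->
    ord_ge (u * v - u' * v') 3.
  move=> uu' vv' u'1 v1.
  by apply: (@ord_ge_sub_mul _ 1 _ _ _ _ 1 1) => //; rewrite -opprB; apply: ord_geN.
have grad m1 m2 q : ord_ge m1 3 -> ord_ge m2 3 -> ord_ge q (d - 2) ->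
    ord_ge ((3%:R * m1 + ps3C a * m2) * q) d.+1.
  move=> m13 m23 qd; apply: ord_geW (ord_geM (ord_geD (ord_geMl _ m13) (ord_geMl _ m23)) qd).
  lia.
apply: ord_geD; last by apply: ord_geD; [apply: ord_geD|]; apply: grad => //; apply: sub_mul.
apply: ord_geD; last first.
  apply: ord_geMl; apply: ord_geB; last by apply: cubic => //; apply: q_1.
  by apply: ord_geD; [apply: ord_geD|]; apply: cubic.
by apply: ord_geD; [apply: ord_geD|];
  (apply: ord_geB; apply: cubic => //; [apply: ord_geMl | apply: q_1]).
Qed.

Variable f : ps3 K.
Hypothesis f_jet : ord_ge (f - hesse X Y Z) 4.

Definition newton_inv d (p : ps3 K * ps3 K * ps3 K) :=
  [/\ ord_ge (p.1.1 - X) 2, ord_ge (p.1.2 - Y) 2, ord_ge (p.2 - Z) 2 &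
      ord_ge (subst3 p.1.1 p.1.2 p.2 f - hesse X Y Z) d].

Lemma newton_step d p : (4 <= d)%N -> newton_inv d p -> exists q1 q2 q3,
  [/\ ord_ge q1 (d - 2), ord_ge q2 (d - 2), ord_ge q3 (d - 2) &
      newton_inv d.+1 (p.1.1 - q1, p.1.2 - q2, p.2 - q3)].
Proof.
case: p => [[p1 p2] p3] d4 [/= p1X p2Y p3Z err].
have X1 := ord_ge_varX K; have Y1 := ord_ge_varY K; have Z1 := ord_ge_varZ K.
have [q1 [q2 [q3 [q1d q2d q3d err']]]] := jacobian_correction three_neq0 a_nonsing d4 err.
exists q1, q2, q3; split => //.
have near q u v : ord_ge q (d - 2) -> ord_ge (u - v) 2 -> ord_ge (u - q - v) 2.
  move=> qd uv; have -> : u - q - v = (u - v) - q by ring.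
  by apply: ord_geB => //; apply: ord_geW qd; lia.
have p1q1X := near _ _ _ q1d p1X; have p2q2Y := near _ _ _ q2d p2Y.
have p3q3Z := near _ _ _ q3d p3Z.
split => //=.
have p1_1 := ord_ge_near_var X1 p1X; have p2_1 := ord_ge_near_var Y1 p2Y.
have p3_1 := ord_ge_near_var Z1 p3Z.
have p1q1_1 := ord_ge_near_var X1 p1q1X; have p2q2_1 := ord_ge_near_var Y1 p2q2Y.
have p3q3_1 := ord_ge_near_var Z1 p3q3Z.
have substE u1 u2 u3 : ord_ge u1 1 -> ord_ge u2 1 -> ord_ge u3 1 ->
    subst3 u1 u2 u3 f = subst3 u1 u2 u3 (f - hesse X Y Z) + hesse u1 u2 u3.
  by move=> *; rewrite subst3B // subst3_hesse // subrK.
set e := subst3 p1 p2 p3 f - hesse X Y Z in err err'.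
set D := hesse_d X Y Z * q1 + hesse_d Y X Z * q2 + hesse_d Z X Y * q3 in err' *.
have -> : subst3 (p1 - q1) (p2 - q2) (p3 - q3) f - hesse X Y Z =
   (subst3 (p1 - q1) (p2 - q2) (p3 - q3) (f - hesse X Y Z) -
    subst3 p1 p2 p3 (f - hesse X Y Z)) +
   ((hesse (p1 - q1) (p2 - q2) (p3 - q3) - hesse p1 p2 p3 + D) + (e - D)).
  by rewrite /e !substE //; ring.
apply: ord_geD; last by apply: ord_geD => //; apply: ord_ge_hesse_taylor.
apply: (@ord_geW _ _ _ ((d - 3) + 4)%N); first lia.
have shift q u : ord_ge q (d - 2) -> ord_ge (u - q - u) (d - 3 + 1).
  by move=> qd; rewrite addrAC subrr add0r; apply: ord_geN; apply: ord_geW qd; lia.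
by apply: ord_ge_sub_subst3 => //; apply: shift.
Qed.

Lemma hesse_normal_form : exists p1 p2 p3,
  [/\ ord_ge (p1 - X) 2, ord_ge (p2 - Y) 2, ord_ge (p3 - Z) 2 &
      subst3 p1 p2 p3 f = hesse X Y Z].
Proof.
have inv0 : newton_inv (0 + 4) (X, Y, Z).
  by split; rewrite //= ?subrr // subst3_XYZ.
have step n p : newton_inv (n + 4) p -> exists p',
    [/\ ord_ge (p'.1.1 - p.1.1) (n + 2), ord_ge (p'.1.2 - p.1.2) (n + 2)
      & ord_ge (p'.2 - p.2) (n + 2)] /\ newton_inv (n.+1 + 4) p'.
  move=> /(newton_step (leq_addl n 4)) [q1 [q2 [q3 [q1n q2n q3n inv']]]].
  have n2 : (n + 4 - 2 = n + 2)%N by lia.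
  have sub_sub (v q : ps3 K) : v - q - v = - q by ring.
  exists (p.1.1 - q1, p.1.2 - q2, p.2 - q3); rewrite /= !sub_sub -n2.
  by split; [split; apply: ord_geN|].
have [u uP] := iterate_choice inv0 step.
pose l1 := lim3 (fun n => (u n).1.1); pose l2 := lim3 (fun n => (u n).1.2).
pose l3 := lim3 (fun n => (u n).2).
have lim n : [/\ ord_ge (l1 - (u n).1.1) (n + 2), ord_ge (l2 - (u n).1.2) (n + 2)
               & ord_ge (l3 - (u n).2) (n + 2)].
  by split; apply: ord_ge_sub_lim3 => m; case: (uP m) => _ [].
have trans l w v : ord_ge (l - w) 2 -> ord_ge (w - v) 2 -> ord_ge (l - v) 2.
  by move=> lw wv; rewrite -(subrKA w); apply: ord_geD.
have [[u0X u0Y u0Z _] _] := uP 0%N; have [l1u0 l2u0 l3u0] := lim 0%N.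
have l1X := trans _ _ _ l1u0 u0X; have l2Y := trans _ _ _ l2u0 u0Y.
have l3Z := trans _ _ _ l3u0 u0Z.
exists l1, l2, l3; split => //.
have X1 := ord_ge_varX K; have Y1 := ord_ge_varY K; have Z1 := ord_ge_varZ K.
have f3 : ord_ge f 3.
  by rewrite -(subrK (hesse X Y Z) f); apply: ord_geD; [apply: ord_geW f_jet|apply: ord_ge_hesse].
apply/eqP; rewrite -subr_eq0; apply/eqP; apply: ord_ge_all_eq0 => N.
have [[uX uY uZ errN] _] := uP N; have [l1u l2u l3u] := lim N.
rewrite (_ : (N + 2 = N + 1 + 1)%N) in l1u l2u l3u; last by lia.
rewrite -(subrKA (subst3 (u N).1.1 (u N).1.2 (u N).2 f)).
apply: ord_geD; last by apply: ord_geW errN; lia.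
apply: (@ord_geW _ _ _ (N + 1 + 3)%N); first lia.
have [l1_1 l2_1 l3_1] := And3 (ord_ge_near_var X1 l1X) (ord_ge_near_var Y1 l2Y)
  (ord_ge_near_var Z1 l3Z).
have [u1_1 u2_1 u3_1] := And3 (ord_ge_near_var X1 uX) (ord_ge_near_var Y1 uY)
  (ord_ge_near_var Z1 uZ).
exact: ord_ge_sub_subst3.
Qed.

End Newton.
Unset Implicit Arguments. Set Strict Implicit.

Theorem mainTheorem12 (K : closedFieldType) (p : nat)
  (hp : p \in [pchar K]) (hp5 : (5 <= p)%N)
  (f : ps3 K) (a : K) (ha : a ^+ 3 + 27%:R != 0)
  (hj : jet3_eq f (hesse_cubic a)) :
  exists Phi : ps3 K -> ps3 K,
    is_alg_aut3 Phi /\ exists a' : K, Phi f = hesse_cubic a'.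
Proof.
have three_neq0 : (3%:R : K) != 0 by rewrite -(dvdn_pcharf hp) gtnNdvd //; lia.
have f_jet : ord_ge (f - hesse a (X K) (Y K) (Z K)) 4.
  by move=> i j k lt4; rewrite ps3_subE -hesse_cubicE hj ?subrr //; lia.
have [p1 [p2 [p3 [p1X p2Y p3Z fE]]]] := hesse_normal_form three_neq0 ha f_jet.
exists (subst3 p1 p2 p3); split; first exact: subst3_is_alg_aut.
by exists a; rewrite fE hesse_cubicE.
Qed.
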